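(* In a generalised differential Seely category, for every $X\in\mathscr C$ and $A\in\mathcal L$, the chain rule holds in the fibre over $X$: $\partial^X_A;\mathbf p^X_A=(\mathbf c^X_A\otimes_X\mathrm{id}_{(X,A)});(\mathbf p^X_A\otimes_X\partial^X_A);\partial^X_{!A}$.
   Context: Composition is diagrammatic; monoidal categories are strict. Setting: an LNL adjunction $\mathcal F\dashv\mathcal U$, $\mathcal F:\mathscr C\to\mathcal L$, between cartesian $(\mathscr C,\times,I)$ and symmetric monoidal $(\mathcal L,\otimes,1)$ (symmetry $\sigma$); $\mathcal U$ lax monoidal via $n_{A,B}$; $\mathcal F$ strong monoidal via isomorphisms $m_{X,Y}:\mathcal F(X)\otimes\mathcal F(Y)\to\mathcal F(X\times Y)$, $m_1$; unit $\eta$, comonad $!=\mathcal F\mathcal U$ with comultiplication $\mathbf p$; $\mathbf c_X:=\mathcal F(\Delta_X);m_{X,X}^{-1}$, $\mathbf w_X:=\mathcal F(t_X);m_1^{-1}$; $\mathbf c_A:=\mathbf c_{\mathcal U(A)}$, $\mathbf w_A:=\mathbf w_{\mathcal U(A)}$. $LS(\mathscr C)$: objects $(X,A)$; morphisms $(f,u):(X,A)\to(Y,B)$ with $f:X\to Y$, $u:\mathcal F(X)\otimes A\to B$; composition $(f,u);(g,v)=(f;g,(\mathbf c_X\otimes\mathrm{id}_A);(\mathcal F(f)\otimes u);v)$; identity $(\mathrm{id}_X,\mathbf w_X\otimes\mathrm{id}_A)$; $\mathbf{ls}(f,u)=f$; fibre $LS(\mathscr C)_X$ = morphisms $(\mathrm{id}_X,u)$,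 with $(X,A)\otimes_X(X,B)=(X,A\otimes B)$ and $(\mathrm{id}_X,u)\otimes_X(\mathrm{id}_X,v)=(\mathrm{id}_X,(\mathbf c_X\otimes\mathrm{id});(\mathrm{id}\otimes\sigma_{\mathcal F(X),A}\otimes\mathrm{id});(u\otimes v))$. With biproducts $\oplus$ in $\mathcal L$: fibrewise injections $\iota^X_i=(\mathrm{id}_X,\mathbf w_X\otimes\iota_i)$; products in $LS(\mathscr C)$: $(X\times Y,A\oplus B)$, projections $(\pi_i,\mathbf w_{X\times Y}\otimes\pi_i)$. GDSC: $\mathcal L$ additive (CMon-enriched, $\otimes$ bilinear) with finite products, and $\mathcal T:\mathscr C\to LS(\mathscr C)$ with: (t.1) $\mathbf{ls}\circ\mathcal T=\mathrm{id}$, $\mathcal T(X)=(X,\lambda(X))$, and $\varphi_{X,Y}:=\langle\mathcal T(\pi_1),\mathcal T(\pi_2)\rangle:\mathcal T(X\times Y)\to(X\times Y,\lambda(X)\oplus\lambda(Y))$ iso; (t.2) $\mathcal T(\mathcal U(A))=(\mathcal U(A),A)$; (t.3) with $i^{X,Y}_2:=\iota^{X\times Y}_2;\varphi^{-1}_{X,Y}$, $⦃(f,u)⦄:=\langle\pi_1;f,(\eta_X\times\mathrm{id});n_{\mathcal F(X),A};\mathcal U(u)\rangle$, $W(f,u):=(⦃(f,u)⦄,(\mathcal F(\pi_1)\otimes\mathrm{id}_A);u)$: $W(f,u);i^{Y,\mathcal U(B)}_2=i^{X,\mathcal U(A)}_2;\mathcal T(⦃(f,u)⦄)$. Differential: for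 $h:X\to Y$ with $\mathcal T(h)=(h,v)$, $\mathrm D(h):=(\mathrm{id}_X,v)$; for $h:X\times Y\to Z$, $\mathrm D_2(h):=i^{X,Y}_2;\mathrm D(h)$. $\mathscr D^X_A:=\mathrm D_2(\pi_2;\eta_{\mathcal U(A)}):(X\times\mathcal U(A),A)\to(X\times\mathcal U(A),!A)$. $\Sigma_{(X,A)}:LS(\mathscr C)_{X\times\mathcal U(A)}\to LS(\mathscr C)_X$: $(X\times\mathcal U(A),B)\mapsto(X,!A\otimes B)$, $(\mathrm{id},u)\mapsto(\mathrm{id}_X,(\mathrm{id}_{\mathcal F(X)}\otimes\mathbf c_A\otimes\mathrm{id}_B);(\sigma_{\mathcal F(X),!A}\otimes\mathrm{id}_{!A\otimes B});(\mathrm{id}_{!A}\otimes((m_{X,\mathcal U(A)}\otimes\mathrm{id}_B);u)))$. $\mu^{(X,A)}_{(X,B)}:=(\mathrm{id}_X,\mathbf w_X\otimes\mathbf w_A\otimes\mathrm{id}_B)$. Deriving transform: $\partial^X_A:=\Sigma_{(X,A)}(\mathscr D^X_A);\mu^{(X,A)}_{(X,!A)}:(X,!A\otimes A)\to(X,!A)$. Fibrewise structure: $\mathbf p^X_A:=(\mathrm{id}_X,\mathbf w_X\otimes\mathbf p_A):(X,!A)\to(X,!!A)$, $\mathbf c^X_A:=(\mathrm{id}_X,\mathbf w_X\otimes\mathbf c_A):(X,!A)\to(X,!A\otimes!A)$. *)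

(* Composition is DIAGRAMMATIC: [f >> g] means "first f, then g". *)

Set Implicit Arguments.
Unset Strict Implicit.
Unset Printing Implicit Defensive.

Record CatData := {
  ob :> Type;
  hom : ob -> ob -> Type;
  idm : forall a : ob, hom a a;
  comp : forall a b c : ob, hom a b -> hom b c -> hom a c }.
Arguments hom {_} _ _.
Arguments idm {_} _.
Arguments comp {_ _ _ _} _ _.
Notation "f >> g" := (comp f g) (at level 40, left associativity).

Record IsCat (C : CatData) : Prop := {
  comp_idl : forall (a b : C) (f : hom a b), idm a >> f = f;
  comp_idr : forall (a b : C) (f : hom a b), f >> idm b = f;
  comp_assoc : forall (a b c d : C) (f : hom a b) (g : hom b c) (h : hom c d),
      (f >> g) >> h = f >> (g >> h) }.

Record Cat := { cdata :> CatData; cat_ok : IsCat cdata }.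

Record Functor (C D : CatData) := {
  fobj :> C -> D;
  fmap : forall a b : C, hom a b -> hom (fobj a) (fobj b) }.
Arguments fmap {_ _} _ {_ _} _.

Record IsFunctor (C D : CatData) (F : Functor C D) : Prop := {
  fmap_id : forall a : C, fmap F (idm a) = idm (F a);
  fmap_comp : forall (a b c : C) (f : hom a b) (g : hom b c),
      fmap F (f >> g) = fmap F f >> fmap F g }.

Record CartData (C : CatData) := {
  term : C;
  bang : forall x : C, hom x term;
  cprod : C -> C -> C;
  cpr1 : forall x y : C, hom (cprod x y) x;
  cpr2 : forall x y : C, hom (cprod x y) y;
  cpair : forall z x y : C, hom z x -> hom z y -> hom z (cprod x y) }.
Arguments term {_} _.
Arguments bang {_} _ _.
Arguments cprod {_} _ _ _.
Arguments cpr1 {_} _ _ _.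
Arguments cpr2 {_} _ _ _.
Arguments cpair {_} _ {_ _ _} _ _.

Record IsCart (C : CatData) (P : CartData C) : Prop := {
  bang_uniq : forall (x : C) (f : hom x (term P)), f = bang P x;
  cpair_pr1 : forall (z x y : C) (f : hom z x) (g : hom z y),
      cpair P f g >> cpr1 P x y = f;
  cpair_pr2 : forall (z x y : C) (f : hom z x) (g : hom z y),
      cpair P f g >> cpr2 P x y = g;
  cpair_uniq : forall (z x y : C) (h : hom z (cprod P x y)),
      h = cpair P (h >> cpr1 P x y) (h >> cpr2 P x y) }.

Section CartOps.
Variables (C : CatData) (P : CartData C).
Definition prodm (a a' b b' : C) (f : hom a a') (g : hom b b') :
  hom (cprod P a b) (cprod P a' b') :=
  cpair P (cpr1 P a b >> f) (cpr2 P a b >> g).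
Definition cassoc (x y z : C) :
  hom (cprod P (cprod P x y) z) (cprod P x (cprod P y z)) :=
  cpair P (cpr1 P _ _ >> cpr1 P x y)
          (cpair P (cpr1 P _ _ >> cpr2 P x y) (cpr2 P _ z)).
Definition cswap (x y : C) : hom (cprod P x y) (cprod P y x) :=
  cpair P (cpr2 P x y) (cpr1 P x y).
Definition diag (x : C) : hom x (cprod P x x) := cpair P (idm x) (idm x).
End CartOps.
Arguments prodm {_} _ {_ _ _ _} _ _.
Arguments cassoc {_} _ _ _ _.
Arguments cswap {_} _ _ _.
Arguments diag {_} _ _.

Record SMCData (L : CatData) := {
  tens : L -> L -> L;
  munit : L;
  tensm : forall a a' b b' : L, hom a a' -> hom b b' -> hom (tens a b) (tens a' b');
  assoc : forall a b c : L, hom (tens (tens a b) c) (tens a (tens b c));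
  assoc_inv : forall a b c : L, hom (tens a (tens b c)) (tens (tens a b) c);
  lu : forall a : L, hom (tens munit a) a;
  lu_inv : forall a : L, hom a (tens munit a);
  ru : forall a : L, hom (tens a munit) a;
  ru_inv : forall a : L, hom a (tens a munit);
  sym : forall a b : L, hom (tens a b) (tens b a) }.
Arguments tens {_} _ _ _.
Arguments munit {_} _.
Arguments tensm {_} _ {_ _ _ _} _ _.
Arguments assoc {_} _ _ _ _.
Arguments assoc_inv {_} _ _ _ _.
Arguments lu {_} _ _.
Arguments lu_inv {_} _ _.
Arguments ru {_} _ _.
Arguments ru_inv {_} _ _.
Arguments sym {_} _ _ _.

Record IsSMC (L : CatData) (M : SMCData L) : Prop := {
  tensm_id : forall a b : L, tensm M (idm a) (idm b) = idm (tens M a b);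
  tensm_comp : forall (a a' a'' b b' b'' : L) (f : hom a a') (f' : hom a' a'')
      (g : hom b b') (g' : hom b' b''),
      tensm M (f >> f') (g >> g') = tensm M f g >> tensm M f' g';
  assoc_iso1 : forall a b c : L, assoc M a b c >> assoc_inv M a b c = idm _;
  assoc_iso2 : forall a b c : L, assoc_inv M a b c >> assoc M a b c = idm _;
  assoc_nat : forall (a a' b b' c c' : L) (f : hom a a') (g : hom b b') (h : hom c c'),
      tensm M (tensm M f g) h >> assoc M a' b' c' = assoc M a b c >> tensm M f (tensm M g h);
  lu_iso1 : forall a : L, lu M a >> lu_inv M a = idm _;
  lu_iso2 : forall a : L, lu_inv M a >> lu M a = idm _;
  lu_nat : forall (a b : L) (f : hom a b), tensm M (idm (munit M)) f >> lu M b = lu M a >> f;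
  ru_iso1 : forall a : L, ru M a >> ru_inv M a = idm _;
  ru_iso2 : forall a : L, ru_inv M a >> ru M a = idm _;
  ru_nat : forall (a b : L) (f : hom a b), tensm M f (idm (munit M)) >> ru M b = ru M a >> f;
  sym_inv : forall a b : L, sym M a b >> sym M b a = idm _;
  sym_nat : forall (a a' b b' : L) (f : hom a a') (g : hom b b'),
      tensm M f g >> sym M a' b' = sym M a b >> tensm M g f;
  pentagon : forall a b c d : L,
      assoc M (tens M a b) c d >> assoc M a b (tens M c d)
      = tensm M (assoc M a b c) (idm d) >> assoc M a (tens M b c) d
        >> tensm M (idm a) (assoc M b c d);
  triangle : forall a b : L,
      assoc M a (munit M) b >> tensm M (idm a) (lu M b) = tensm M (ru M a) (idm b);
  hexagon : forall a b c : L,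
      assoc M a b c >> sym M a (tens M b c) >> assoc M b c a
      = tensm M (sym M a b) (idm c) >> assoc M b a c >> tensm M (idm b) (sym M a c) }.

Record AddData (L : CatData) := {
  zero : forall a b : L, hom a b;
  add : forall a b : L, hom a b -> hom a b -> hom a b }.
Arguments zero {_} _ _ _.
Arguments add {_} _ {_ _} _ _.

Record IsAdditive (L : CatData) (M : SMCData L) (Z : AddData L) : Prop := {
  add_assoc : forall (a b : L) (f g h : hom a b), add Z (add Z f g) h = add Z f (add Z g h);
  add_comm : forall (a b : L) (f g : hom a b), add Z f g = add Z g f;
  add_0l : forall (a b : L) (f : hom a b), add Z (zero Z a b) f = f;
  comp_addl : forall (a b c : L) (f g : hom a b) (h : hom b c),
      add Z f g >> h = add Z (f >> h) (g >> h);
  comp_addr : forall (a b c : L) (h : hom a b) (f g : hom b c),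
      h >> add Z f g = add Z (h >> f) (h >> g);
  comp_0l : forall (a b c : L) (h : hom b c), zero Z a b >> h = zero Z a c;
  comp_0r : forall (a b c : L) (h : hom a b), h >> zero Z b c = zero Z a c;
  tensm_addl : forall (a a' b b' : L) (f f' : hom a a') (g : hom b b'),
      tensm M (add Z f f') g = add Z (tensm M f g) (tensm M f' g);
  tensm_addr : forall (a a' b b' : L) (f : hom a a') (g g' : hom b b'),
      tensm M f (add Z g g') = add Z (tensm M f g) (tensm M f g');
  tensm_0l : forall (a a' b b' : L) (g : hom b b'),
      tensm M (zero Z a a') g = zero Z _ _;
  tensm_0r : forall (a a' b b' : L) (f : hom a a'),
      tensm M f (zero Z b b') = zero Z _ _ }.

Record LNL := {
  CC : Cat;
  Ccart : CartData CC;
  Ccart_ok : IsCart Ccart;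
  LL : Cat;
  Lsmc : SMCData LL;
  Lsmc_ok : IsSMC Lsmc;
  FF : Functor CC LL;
  FF_ok : IsFunctor FF;
  UU : Functor LL CC;
  UU_ok : IsFunctor UU;
  eta : forall X : CC, hom X (UU (FF X));
  eps : forall A : LL, hom (FF (UU A)) A;
  eta_nat : forall (X Y : CC) (f : hom X Y), f >> eta Y = eta X >> fmap UU (fmap FF f);
  eps_nat : forall (A B : LL) (g : hom A B), fmap FF (fmap UU g) >> eps B = eps A >> g;
  tri1 : forall X : CC, fmap FF (eta X) >> eps (FF X) = idm (FF X);
  tri2 : forall A : LL, eta (UU A) >> fmap UU (eps A) = idm (UU A);
  mm : forall X Y : CC, hom (tens Lsmc (FF X) (FF Y)) (FF (cprod Ccart X Y));
  mm_inv : forall X Y : CC, hom (FF (cprod Ccart X Y)) (tens Lsmc (FF X) (FF Y));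
  m1 : hom (munit Lsmc) (FF (term Ccart));
  m1_inv : hom (FF (term Ccart)) (munit Lsmc);
  mm_iso1 : forall X Y : CC, mm X Y >> mm_inv X Y = idm _;
  mm_iso2 : forall X Y : CC, mm_inv X Y >> mm X Y = idm _;
  m1_iso1 : m1 >> m1_inv = idm _;
  m1_iso2 : m1_inv >> m1 = idm _;
  mm_nat : forall (X X' Y Y' : CC) (f : hom X X') (g : hom Y Y'),
      tensm Lsmc (fmap FF f) (fmap FF g) >> mm X' Y' = mm X Y >> fmap FF (prodm Ccart f g);
  mm_assoc : forall X Y Z : CC,
      tensm Lsmc (mm X Y) (idm (FF Z)) >> mm (cprod Ccart X Y) Z >> fmap FF (cassoc Ccart X Y Z)
      = assoc Lsmc (FF X) (FF Y) (FF Z) >> tensm Lsmc (idm (FF X)) (mm Y Z)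
        >> mm X (cprod Ccart Y Z);
  mm_lunit : forall X : CC,
      tensm Lsmc m1 (idm (FF X)) >> mm (term Ccart) X >> fmap FF (cpr2 Ccart (term Ccart) X)
      = lu Lsmc (FF X);
  mm_runit : forall X : CC,
      tensm Lsmc (idm (FF X)) m1 >> mm X (term Ccart) >> fmap FF (cpr1 Ccart X (term Ccart))
      = ru Lsmc (FF X);
  mm_sym : forall X Y : CC,
      mm X Y >> fmap FF (cswap Ccart X Y) = sym Lsmc (FF X) (FF Y) >> mm Y X;
  nn : forall A B : LL, hom (cprod Ccart (UU A) (UU B)) (UU (tens Lsmc A B));
  n1 : hom (term Ccart) (UU (munit Lsmc));
  nn_nat : forall (A A' B B' : LL) (f : hom A A') (g : hom B B'),
      prodm Ccart (fmap UU f) (fmap UU g) >> nn A' B' = nn A B >> fmap UU (tensm Lsmc f g);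
  nn_assoc : forall A B C : LL,
      prodm Ccart (nn A B) (idm (UU C)) >> nn (tens Lsmc A B) C >> fmap UU (assoc Lsmc A B C)
      = cassoc Ccart (UU A) (UU B) (UU C) >> prodm Ccart (idm (UU A)) (nn B C)
        >> nn A (tens Lsmc B C);
  nn_lunit : forall A : LL,
      prodm Ccart n1 (idm (UU A)) >> nn (munit Lsmc) A >> fmap UU (lu Lsmc A)
      = cpr2 Ccart (term Ccart) (UU A);
  nn_runit : forall A : LL,
      prodm Ccart (idm (UU A)) n1 >> nn A (munit Lsmc) >> fmap UU (ru Lsmc A)
      = cpr1 Ccart (UU A) (term Ccart);
  nn_sym : forall A B : LL,
      nn A B >> fmap UU (sym Lsmc A B) = cswap Ccart (UU A) (UU B) >> nn B A;
  eta_mon : forall X Y : CC,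
      eta (cprod Ccart X Y)
      = prodm Ccart (eta X) (eta Y) >> nn (FF X) (FF Y) >> fmap UU (mm X Y);
  eta_mon1 : eta (term Ccart) = n1 >> fmap UU m1;
  eps_mon : forall A B : LL,
      mm (UU A) (UU B) >> fmap FF (nn A B) >> eps (tens Lsmc A B)
      = tensm Lsmc (eps A) (eps B);
  eps_mon1 : m1 >> fmap FF n1 >> eps (munit Lsmc) = idm (munit Lsmc) }.







Arguments eta : clear implicits.
Arguments eps : clear implicits.
Arguments mm : clear implicits.
Arguments mm_inv : clear implicits.
Arguments nn : clear implicits.

Section LSDefs.
Variable G : LNL.

Local Notation C := (CC G).
Local Notation L := (LL G).
Local Notation "a ⊗ b" := (tens (Lsmc G) a b) (at level 35, right associativity).
Local Notation "f ⊗m g" := (tensm (Lsmc G) f g) (at level 35).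
Local Notation F := (FF G).
Local Notation U := (UU G).
Local Notation "x × y" := (cprod (Ccart G) x y) (at level 34).

Definition bangL (A : L) : L := F (U A).

Definition pcomul (A : L) : hom (bangL A) (bangL (bangL A)) := fmap F (eta G (U A)).

Definition cX (X : C) : hom (F X) (F X ⊗ F X) :=
  fmap F (diag (Ccart G) X) >> mm_inv G X X.
Definition wX (X : C) : hom (F X) (munit (Lsmc G)) :=
  fmap F (bang (Ccart G) X) >> m1_inv G.
Definition cA (A : L) : hom (bangL A) (bangL A ⊗ bangL A) := cX (U A).
Definition wA (A : L) : hom (bangL A) (munit (Lsmc G)) := wX (U A).

(* morphisms (X,A) -> (Y,B) of LS(C): pairs (f, u) *)
Definition LSHom (X : C) (A : L) (Y : C) (B : L) : Type :=
  (hom X Y * hom (F X ⊗ A) B)%type.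

Definition LScomp (X Y Z : C) (A B D : L) (p : LSHom X A Y B) (q : LSHom Y B Z D) :
  LSHom X A Z D :=
  (fst p >> fst q,
   (cX X ⊗m idm A) >> assoc (Lsmc G) (F X) (F X) A
     >> (fmap F (fst p) ⊗m snd p) >> snd q).

Definition LSid (X : C) (A : L) : LSHom X A X A :=
  (idm X, (wX X ⊗m idm A) >> lu (Lsmc G) A).

(* the fibrewise image of an L-morphism g : A -> B, i.e. (id_X, w_X ⊗ g) *)
Definition lift (X : C) (A B : L) (g : hom A B) : LSHom X A X B :=
  (idm X, (wX X ⊗m g) >> lu (Lsmc G) B).

(* fibrewise tensor  (id,u) ⊗_X (id,v) *)
Definition fibtens (X : C) (A A' B B' : L) (p : LSHom X A X A') (q : LSHom X B X B') :
  LSHom X (A ⊗ B) X (A' ⊗ B') :=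
  (idm X,
   (cX X ⊗m idm (A ⊗ B))
   >> assoc (Lsmc G) (F X) (F X) (A ⊗ B)
   >> (idm (F X) ⊗m assoc_inv (Lsmc G) (F X) A B)
   >> (idm (F X) ⊗m (sym (Lsmc G) (F X) A ⊗m idm B))
   >> (idm (F X) ⊗m assoc (Lsmc G) A (F X) B)
   >> assoc_inv (Lsmc G) (F X) A (F X ⊗ B)
   >> (snd p ⊗m snd q)).

(* the fibrewise functor Sigma_{(X,A)} : LS(C)_{X×U(A)} -> LS(C)_X *)
Definition Sigma (X : C) (A B D : L) (u : hom (F (X × U A) ⊗ B) D) :
  LSHom X (bangL A ⊗ B) X (bangL A ⊗ D) :=
  (idm X,
   (idm (F X) ⊗m (cA A ⊗m idm B))
   >> (idm (F X) ⊗m assoc (Lsmc G) (bangL A) (bangL A) B)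
   >> assoc_inv (Lsmc G) (F X) (bangL A) (bangL A ⊗ B)
   >> (sym (Lsmc G) (F X) (bangL A) ⊗m idm (bangL A ⊗ B))
   >> assoc (Lsmc G) (bangL A) (F X) (bangL A ⊗ B)
   >> (idm (bangL A) ⊗m assoc_inv (Lsmc G) (F X) (bangL A) B)
   >> (idm (bangL A) ⊗m ((mm G X (U A) ⊗m idm B) >> u))).

Definition mu (X : C) (A B : L) : LSHom X (bangL A ⊗ B) X B :=
  lift X ((wA A ⊗m idm B) >> lu (Lsmc G) B).

Definition pX (X : C) (A : L) : LSHom X (bangL A) X (bangL (bangL A)) := lift X (pcomul A).
Definition cXA (X : C) (A : L) : LSHom X (bangL A) X (bangL A ⊗ bangL A) := lift X (cA A).

Definition castLS (X Y : C) (A A' B B' : L) (e1 : A = A') (e2 : B = B')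
  (h : LSHom X A Y B) : LSHom X A' Y B' :=
  match e1 in _ = A1 return LSHom X A1 Y B' with
  | eq_refl => match e2 in _ = B1 return LSHom X A Y B1 with
               | eq_refl => h end end.

Definition brace (X Y : C) (A B : L) (f : hom X Y) (u : hom (F X ⊗ A) B) :
  hom (X × U A) (Y × U B) :=
  cpair (Ccart G) (cpr1 (Ccart G) X (U A) >> f)
        (prodm (Ccart G) (eta G X) (idm (U A)) >> nn G (F X) A >> fmap U u).

Definition Wmor (X Y : C) (A B : L) (f : hom X Y) (u : hom (F X ⊗ A) B) :
  LSHom (X × U A) A (Y × U B) B :=
  (brace f u, (fmap F (cpr1 (Ccart G) X (U A)) ⊗m idm A) >> u).

End LSDefs.

Record GData (G : LNL) := {
  Ladd : AddData (LL G);
  Ladd_ok : IsAdditive (Lsmc G) Ladd;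
  Lprod : CartData (LL G);        (* finite products in L (biproducts, L additive) *)
  Lprod_ok : IsCart Lprod;
  lam : CC G -> LL G;             (* T(X) = (X, lam X) *)
  Tv : forall (X Y : CC G), hom X Y -> hom (tens (Lsmc G) (FF G X) (lam X)) (lam Y);
                                  (* T(f) = (f, Tv f) ; thus ls ∘ T = id *)
  phi_inv : forall X Y : CC G,
      LSHom (cprod (Ccart G) X Y) (cprod Lprod (lam X) (lam Y))
            (cprod (Ccart G) X Y) (lam (cprod (Ccart G) X Y));
  lamU : forall A : LL G, lam (UU G A) = A }.
Arguments Ladd {_} _.
Arguments Lprod {_} _.
Arguments lam {_} _ _.
Arguments Tv {_} _ {_ _} _.
Arguments phi_inv {_} _ _ _.
Arguments lamU {_} _ _.

Section GDefs.
Variables (G : LNL) (T : GData G).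
Local Notation C := (CC G).
Local Notation L := (LL G).
Local Notation "x × y" := (cprod (Ccart G) x y) (at level 34).

Definition Tmor (X Y : C) (f : hom X Y) : LSHom X (lam T X) Y (lam T Y) := (f, Tv T f).

Definition LSpair (Z X Y : C) (D A B : L) (p : LSHom Z D X A) (q : LSHom Z D Y B) :
  LSHom Z D (X × Y) (cprod (Lprod T) A B) :=
  (cpair (Ccart G) (fst p) (fst q), cpair (Lprod T) (snd p) (snd q)).

Definition phi (X Y : C) :
  LSHom (X × Y) (lam T (X × Y)) (X × Y) (cprod (Lprod T) (lam T X) (lam T Y)) :=
  LSpair (Tmor (cpr1 (Ccart G) X Y)) (Tmor (cpr2 (Ccart G) X Y)).

Definition inj2 (A B : L) : hom B (cprod (Lprod T) A B) :=
  cpair (Lprod T) (zero (Ladd T) B A) (idm B).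

Definition i2 (X Y : C) : LSHom (X × Y) (lam T Y) (X × Y) (lam T (X × Y)) :=
  LScomp (lift (X × Y) (inj2 (lam T X) (lam T Y))) (phi_inv T X Y).

(* i_2^{X,U A}, with its source read as (X × U A, A) via (t.2) *)
Definition i2U (X : C) (A : L) : LSHom (X × UU G A) A (X × UU G A) (lam T (X × UU G A)) :=
  castLS (lamU T A) eq_refl (i2 X (UU G A)).

Definition Dmor (X Y : C) (h : hom X Y) : LSHom X (lam T X) X (lam T Y) := (idm X, Tv T h).

Definition D2 (X Y Z : C) (h : hom (X × Y) Z) : LSHom (X × Y) (lam T Y) (X × Y) (lam T Z) :=
  LScomp (i2 X Y) (Dmor h).

Definition scrD (X : C) (A : L) : LSHom (X × UU G A) A (X × UU G A) (bangL A) :=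
  castLS (lamU T A) (lamU T (bangL A))
    (D2 (cpr2 (Ccart G) X (UU G A) >> eta G (UU G A))).

Definition deriv (X : C) (A : L) : LSHom X (tens (Lsmc G) (bangL A) A) X (bangL A) :=
  LScomp (Sigma (snd (scrD X A))) (mu X A (bangL A)).

End GDefs.

Record IsGDSC (G : LNL) (T : GData G) : Prop := {
  T_id : forall X : CC G, Tmor T (idm X) = LSid X (lam T X);
  T_comp : forall (X Y Z : CC G) (f : hom X Y) (g : hom Y Z),
      Tmor T (f >> g) = LScomp (Tmor T f) (Tmor T g);
  phi_iso1 : forall X Y : CC G, LScomp (phi T X Y) (phi_inv T X Y) = LSid _ _;
  phi_iso2 : forall X Y : CC G, LScomp (phi_inv T X Y) (phi T X Y) = LSid _ _;
  t3 : forall (X Y : CC G) (A B : LL G) (f : hom X Y)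
         (u : hom (tens (Lsmc G) (FF G X) A) B),
      LScomp (Wmor f u) (i2U T Y B) = LScomp (i2U T X A) (Tmor T (brace f u)) }.


(* Both sides lie in the fibre over X, so only their L-components have to agree. The
   deriving transform is Σ(𝒟);μ, whose L-component is (m ⊗ 1);𝒟, so everything rests on
   the chain rule for 𝒟^X_A = D_2(π2;η) in the fibre over X × U A:
     𝒟^X_A ; p = (c ⊗ 1) ; (F(id × η) ⊗ 𝒟^X_A) ; 𝒟^X_{!A}.
   It is functoriality of T applied to π2;η;U(p) = (id × η);π2;η. On the left, (t.3)
   makes T linear on id × U(p), so D_2 of the composite is D_2(π2;η);p. On the right,
   T(id × η) has no derivative in the first variable, so D_2 of the composite is
   (F(id × η) ⊗ D_2(π2;η)) followed by D_2(π2;η) at !A. The rest is coherence: along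
   m, the comultiplication of F(X × U A) is the middle-swapped tensor of those of F X
   and !A. *)

Set Implicit Arguments.
Unset Strict Implicit.

Existing Class IsFunctor.
Existing Class IsCart.
Existing Class IsSMC.
Existing Class IsAdditive.
#[export] Instance lnl_F_functor (G : LNL) : IsFunctor (FF G) := FF_ok G.
#[export] Instance lnl_U_functor (G : LNL) : IsFunctor (UU G) := UU_ok G.
#[export] Instance lnl_cartesian (G : LNL) : IsCart (Ccart G) := Ccart_ok G.
#[export] Instance lnl_monoidal (G : LNL) : IsSMC (Lsmc G) := Lsmc_ok G.
#[export] Instance gdata_biproduct (G : LNL) (T : GData G) : IsCart (Lprod T) := Lprod_ok T.
#[export] Instance gdata_additive (G : LNL) (T : GData G) : IsAdditive (Lsmc G) (Ladd T) :=
  Ladd_ok T.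

Section Category.
Context {K : Cat}.

Lemma id_comp (a b : K) (f : hom a b) : idm a >> f = f.
Proof. exact (comp_idl (cat_ok K) f). Qed.

Lemma comp_id (a b : K) (f : hom a b) : f >> idm b = f.
Proof. exact (comp_idr (cat_ok K) f). Qed.

Lemma compA (a b c d : K) (f : hom a b) (g : hom b c) (h : hom c d) :
  (f >> g) >> h = f >> (g >> h).
Proof. exact (comp_assoc (cat_ok K) f g h). Qed.

Lemma chain_eq2 (a b c d : K) (f : hom a b) (g : hom b c) (h : hom a c) :
  f >> g = h -> forall r : hom c d, f >> (g >> r) = h >> r.
Proof. intros <- r. symmetry. apply compA. Qed.

Lemma chain_eq3 (a b c e d : K) (f : hom a b) (g : hom b c) (k : hom c e) (h : hom a e) :
  f >> (g >> k) = h -> forall r : hom e d, f >> (g >> (k >> r)) = h >> r.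
Proof. intros <- r. rewrite !compA. reflexivity. Qed.

Lemma chain_eq4 (a b c e e' d : K) (f : hom a b) (g : hom b c) (k : hom c e)
    (k' : hom e e') (h : hom a e') :
  f >> (g >> (k >> k')) = h -> forall r : hom e' d, f >> (g >> (k >> (k' >> r))) = h >> r.
Proof. intros <- r. rewrite !compA. reflexivity. Qed.

Lemma chain_eq5 (a b c e e' e'' d : K) (f : hom a b) (g : hom b c) (k : hom c e)
    (k' : hom e e') (k'' : hom e' e'') (h : hom a e'') :
  f >> (g >> (k >> (k' >> k''))) = h ->
  forall r : hom e'' d, f >> (g >> (k >> (k' >> (k'' >> r)))) = h >> r.
Proof. intros <- r. rewrite !compA. reflexivity. Qed.

Definition eq_hom (a b : K) (e : a = b) : hom a b :=
  match e in _ = b' return hom a b' with eq_refl => idm a end.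

Lemma eq_homK (a b : K) (e : a = b) : eq_hom e >> eq_hom (eq_sym e) = idm a.
Proof. destruct e. apply id_comp. Qed.

Lemma eq_hom_symK (a b : K) (e : a = b) : eq_hom (eq_sym e) >> eq_hom e = idm b.
Proof. destruct e. apply id_comp. Qed.

End Category.

(* Composites are kept right-associated; [arw e] rewrites with an equation whose
   left side is a chain of up to five arrows, wherever that chain occurs as a prefix
   of a chain in the goal, and re-associates the result. *)
Ltac reassoc := repeat rewrite compA.
Ltac reassoc_in H := repeat rewrite compA in H.
Tactic Notation "arw" uconstr(e) :=
  first [ rewrite e | rewrite (chain_eq2 e) | rewrite (chain_eq3 e)
        | rewrite (chain_eq4 e) | rewrite (chain_eq5 e) ];
  reassoc.
Tactic Notation "arw_rev" uconstr(e) := arw (eq_sym e).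

Section Functors.
Context {K K' : Cat} (F : Functor K K') {HF : IsFunctor F}.

Lemma functor_id (a : K) : fmap F (idm a) = idm (F a).
Proof. exact (fmap_id HF a). Qed.

Lemma functor_comp (a b c : K) (f : hom a b) (g : hom b c) :
  fmap F (f >> g) = fmap F f >> fmap F g.
Proof. exact (fmap_comp HF f g). Qed.

End Functors.
Arguments functor_id {K K'} F {HF} a.
Arguments functor_comp {K K'} F {HF} [a b c] f g.

Section Cartesian.
Context {K : Cat} {P : CartData K} {HP : IsCart P}.
Local Notation "x × y" := (cprod P x y) (at level 34).
Local Notation p1 := (cpr1 P).
Local Notation p2 := (cpr2 P).

Lemma pair_pr1 (z x y : K) (f : hom z x) (g : hom z y) : cpair P f g >> p1 x y = f.
Proof. exact (cpair_pr1 HP f g). Qed.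

Lemma pair_pr2 (z x y : K) (f : hom z x) (g : hom z y) : cpair P f g >> p2 x y = g.
Proof. exact (cpair_pr2 HP f g). Qed.

Lemma cprod_hom_ext (z x y : K) (h k : hom z (x × y)) :
  h >> p1 x y = k >> p1 x y -> h >> p2 x y = k >> p2 x y -> h = k.
Proof. intros E1 E2. rewrite (cpair_uniq HP h), (cpair_uniq HP k), E1, E2. reflexivity. Qed.

Lemma comp_cpair (w z x y : K) (h : hom w z) (f : hom z x) (g : hom z y) :
  h >> cpair P f g = cpair P (h >> f) (h >> g).
Proof. apply cprod_hom_ext; rewrite compA, ?pair_pr1, ?pair_pr2; reflexivity. Qed.

Lemma cpair_pr (x y : K) : cpair P (p1 x y) (p2 x y) = idm (x × y).
Proof. apply cprod_hom_ext; rewrite ?pair_pr1, ?pair_pr2, id_comp; reflexivity. Qed.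

Lemma term_hom_eq (x : K) (f g : hom x (term P)) : f = g.
Proof. rewrite (bang_uniq HP f), (bang_uniq HP g). reflexivity. Qed.

Lemma prodm_pr1 (a a' b b' : K) (f : hom a a') (g : hom b b') :
  prodm P f g >> p1 a' b' = p1 a b >> f.
Proof. apply pair_pr1. Qed.

Lemma prodm_pr2 (a a' b b' : K) (f : hom a a') (g : hom b b') :
  prodm P f g >> p2 a' b' = p2 a b >> g.
Proof. apply pair_pr2. Qed.

Lemma diag_pr1 (x : K) : diag P x >> p1 x x = idm x.
Proof. apply pair_pr1. Qed.

Lemma diag_pr2 (x : K) : diag P x >> p2 x x = idm x.
Proof. apply pair_pr2. Qed.

End Cartesian.

Ltac cart_simpl :=
  repeat first [ arw (pair_pr1 _ _) | arw (pair_pr2 _ _) | arw (prodm_pr1 _ _)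
               | arw (prodm_pr2 _ _) | arw (diag_pr1 _) | arw (diag_pr2 _)
               | rewrite id_comp | rewrite comp_id ].
Ltac cart := repeat apply cprod_hom_ext; reassoc; cart_simpl; try reflexivity.

Section CartesianMaps.
Context {K : Cat} {P : CartData K} {HP : IsCart P}.
Local Notation "x × y" := (cprod P x y) (at level 34).
Local Notation p1 := (cpr1 P).
Local Notation p2 := (cpr2 P).

Definition cassoc_inv (x y z : K) : hom (x × (y × z)) ((x × y) × z) :=
  cpair P (cpair P (p1 _ _) (p2 _ _ >> p1 _ _)) (p2 _ _ >> p2 _ _).

Definition cmiddle_swap (x y : K) : hom ((x × x) × (y × y)) ((x × y) × (x × y)) :=
  cpair P (cpair P (p1 _ _ >> p1 _ _) (p2 _ _ >> p1 _ _))
          (cpair P (p1 _ _ >> p2 _ _) (p2 _ _ >> p2 _ _)).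

Lemma cassocK (x y z : K) : cassoc P x y z >> cassoc_inv x y z = idm _.
Proof. unfold cassoc, cassoc_inv. cart. Qed.

Lemma prodm_comp (a a' a'' b b' b'' : K) (f : hom a a') (f' : hom a' a'')
    (g : hom b b') (g' : hom b' b'') :
  prodm P f g >> prodm P f' g' = prodm P (f >> f') (g >> g').
Proof. cart. Qed.

End CartesianMaps.

(** * Symmetric monoidal categories *)

Section Monoidal.
Context {L : Cat} {M : SMCData L} {HM : IsSMC M}.
Local Notation "a ⊗ b" := (tens M a b) (at level 35, right associativity).
Local Notation "f ⊗m g" := (tensm M f g) (at level 35).
Local Notation al := (assoc M).
Local Notation ali := (assoc_inv M).
Local Notation lu' := (lu M).
Local Notation ru' := (ru M).
Local Notation sg := (sym M).
Local Notation I := (munit M).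

Lemma tens_comp (a a' a'' b b' b'' : L) (f : hom a a') (f' : hom a' a'')
    (g : hom b b') (g' : hom b' b'') :
  (f >> f') ⊗m (g >> g') = (f ⊗m g) >> (f' ⊗m g').
Proof. exact (tensm_comp HM f f' g g'). Qed.

Lemma tens_id (a b : L) : idm a ⊗m idm b = idm (a ⊗ b).
Proof. exact (tensm_id HM a b). Qed.

Lemma tens_split_lr (a a' b b' : L) (f : hom a a') (g : hom b b') :
  f ⊗m g = (f ⊗m idm b) >> (idm a' ⊗m g).
Proof. rewrite <- tens_comp, id_comp, comp_id. reflexivity. Qed.

Lemma tens_split_rl (a a' b b' : L) (f : hom a a') (g : hom b b') :
  f ⊗m g = (idm a ⊗m g) >> (f ⊗m idm b').
Proof. rewrite <- tens_comp, id_comp, comp_id. reflexivity. Qed.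

Lemma tens_interchange (a a' b b' : L) (f : hom a a') (g : hom b b') :
  (f ⊗m idm b) >> (idm a' ⊗m g) = (idm a ⊗m g) >> (f ⊗m idm b').
Proof. rewrite <- tens_split_lr, <- tens_split_rl. reflexivity. Qed.

Lemma tens_id_comp (x a b c : L) (f : hom a b) (g : hom b c) :
  idm x ⊗m (f >> g) = (idm x ⊗m f) >> (idm x ⊗m g).
Proof. rewrite <- tens_comp, id_comp. reflexivity. Qed.

Lemma tens_comp_id (x a b c : L) (f : hom a b) (g : hom b c) :
  (f >> g) ⊗m idm x = (f ⊗m idm x) >> (g ⊗m idm x).
Proof. rewrite <- tens_comp, id_comp. reflexivity. Qed.

Lemma tens_comp_l_late (a a' a'' b b' : L) (f : hom a a') (f' : hom a' a'') (w : hom b b') :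
  (f >> f') ⊗m w = (f ⊗m idm b) >> (f' ⊗m w).
Proof. rewrite <- tens_comp, id_comp. reflexivity. Qed.

Lemma tens_comp_l_early (a a' a'' b b' : L) (f : hom a a') (f' : hom a' a'') (w : hom b b') :
  (f >> f') ⊗m w = (f ⊗m w) >> (f' ⊗m idm b').
Proof. rewrite <- tens_comp, comp_id. reflexivity. Qed.

Lemma tens_comp_r_late (a a' b b' b'' : L) (f : hom a a') (g : hom b b') (w : hom b' b'') :
  f ⊗m (g >> w) = (idm a ⊗m g) >> (f ⊗m w).
Proof. rewrite <- tens_comp, id_comp. reflexivity. Qed.

Lemma tens_comp_r_early (a a' b b' b'' : L) (f : hom a a') (g : hom b b') (h : hom b' b'') :
  f ⊗m (g >> h) = (f ⊗m g) >> (idm a' ⊗m h).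
Proof. rewrite <- tens_comp, comp_id. reflexivity. Qed.

Lemma assoc_natural (a a' b b' c c' : L) (f : hom a a') (g : hom b b') (h : hom c c') :
  ((f ⊗m g) ⊗m h) >> al a' b' c' = al a b c >> (f ⊗m (g ⊗m h)).
Proof. exact (assoc_nat HM f g h). Qed.

Lemma assocK (a b c : L) : al a b c >> ali a b c = idm _.
Proof. exact (assoc_iso1 HM a b c). Qed.

Lemma assoc_invK (a b c : L) : ali a b c >> al a b c = idm _.
Proof. exact (assoc_iso2 HM a b c). Qed.

Lemma assoc_inv_natural (a a' b b' c c' : L) (f : hom a a') (g : hom b b') (h : hom c c') :
  (f ⊗m (g ⊗m h)) >> ali a' b' c' = ali a b c >> ((f ⊗m g) ⊗m h).
Proof.
  rewrite <- (id_comp (f ⊗m (g ⊗m h))), <- (assoc_invK a b c). reassoc.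
  arw_rev (assoc_natural f g h). rewrite assocK, comp_id. reflexivity.
Qed.

Lemma assoc_natural_l (a a' b c : L) (f : hom a a') :
  al a b c >> (f ⊗m idm (b ⊗ c)) = ((f ⊗m idm b) ⊗m idm c) >> al a' b c.
Proof. rewrite assoc_natural, tens_id. reflexivity. Qed.

Lemma assoc_natural_m (a b b' c : L) (g : hom b b') :
  al a b c >> (idm a ⊗m (g ⊗m idm c)) = ((idm a ⊗m g) ⊗m idm c) >> al a b' c.
Proof. rewrite assoc_natural. reflexivity. Qed.

Lemma assoc_natural_r (a b c c' : L) (h : hom c c') :
  al a b c >> (idm a ⊗m (idm b ⊗m h)) = (idm (a ⊗ b) ⊗m h) >> al a b c'.
Proof. rewrite <- assoc_natural, tens_id. reflexivity. Qed.

Lemma assoc_inv_natural_m (a b b' c : L) (g : hom b b') :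
  (idm a ⊗m (g ⊗m idm c)) >> ali a b' c = ali a b c >> ((idm a ⊗m g) ⊗m idm c).
Proof. rewrite assoc_inv_natural. reflexivity. Qed.

Lemma assoc_inv_natural_r (a b c c' : L) (h : hom c c') :
  (idm a ⊗m (idm b ⊗m h)) >> ali a b c' = ali a b c >> (idm (a ⊗ b) ⊗m h).
Proof. rewrite assoc_inv_natural, tens_id. reflexivity. Qed.

Lemma lu_natural (a b : L) (f : hom a b) : (idm I ⊗m f) >> lu' b = lu' a >> f.
Proof. exact (lu_nat HM f). Qed.

Lemma ru_natural (a b : L) (f : hom a b) : (f ⊗m idm I) >> ru' b = ru' a >> f.
Proof. exact (ru_nat HM f). Qed.

Lemma sym_natural (a a' b b' : L) (f : hom a a') (g : hom b b') :
  (f ⊗m g) >> sg a' b' = sg a b >> (g ⊗m f).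
Proof. exact (sym_nat HM f g). Qed.

Lemma symK (a b : L) : sg a b >> sg b a = idm _.
Proof. exact (sym_inv HM a b). Qed.

Lemma pentagon_eq (a b c d : L) :
  al (a ⊗ b) c d >> al a b (c ⊗ d)
  = (al a b c ⊗m idm d) >> al a (b ⊗ c) d >> (idm a ⊗m al b c d).
Proof. exact (pentagon HM a b c d). Qed.

Lemma triangle_eq (a b : L) : al a I b >> (idm a ⊗m lu' b) = ru' a ⊗m idm b.
Proof. exact (triangle HM a b). Qed.

Lemma hexagon_eq (a b c : L) :
  al a b c >> sg a (b ⊗ c) >> al b c a
  = (sg a b ⊗m idm c) >> al b a c >> (idm b ⊗m sg a c).
Proof. exact (hexagon HM a b c). Qed.

Lemma tens_unit_inj_l (a b : L) (f g : hom a b) : idm I ⊗m f = idm I ⊗m g -> f = g.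
Proof.
  intro E. rewrite <- (id_comp f), <- (id_comp g), <- (lu_iso2 HM a). reassoc.
  rewrite <- !lu_natural, E. reflexivity.
Qed.

Lemma tens_unit_inj_r (a b : L) (f g : hom a b) : f ⊗m idm I = g ⊗m idm I -> f = g.
Proof.
  intro E. rewrite <- (id_comp f), <- (id_comp g), <- (ru_iso2 HM a). reassoc.
  rewrite <- !ru_natural, E. reflexivity.
Qed.

(* Kelly: from the pentagon and the triangle, after cancelling [idm I ⊗m _]. *)
Lemma assoc_lu (a b : L) : al I a b >> lu' (a ⊗ b) = lu' a ⊗m idm b.
Proof.
  apply tens_unit_inj_l.
  assert (E : (al I I a ⊗m idm b) >> (al I (I ⊗ a) b >> (idm I ⊗m (al I a b >> lu' (a ⊗ b))))
            = (al I I a ⊗m idm b) >> (al I (I ⊗ a) b >> (idm I ⊗m (lu' a ⊗m idm b)))).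
  { rewrite tens_id_comp. rewrite <- !compA, <- pentagon_eq. reassoc.
    rewrite triangle_eq, <- tens_id, <- !assoc_natural.
    arw_rev (tens_comp _ _ _ _). rewrite triangle_eq, id_comp. reflexivity. }
  rewrite <- (id_comp (idm I ⊗m (al I a b >> lu' (a ⊗ b)))).
  rewrite <- (id_comp (idm I ⊗m (lu' a ⊗m idm b))).
  rewrite <- (assoc_invK I (I ⊗ a) b). reassoc.
  rewrite <- (id_comp (al I (I ⊗ a) b >> (idm I ⊗m (al I a b >> lu' (a ⊗ b))))).
  rewrite <- (id_comp (al I (I ⊗ a) b >> (idm I ⊗m (lu' a ⊗m idm b)))).
  rewrite <- tens_id, <- (assoc_invK I I a), tens_comp_id. reassoc.
  arw E. reflexivity.
Qed.

Lemma assoc_inv_lu (a b : L) : ali I a b >> (lu' a ⊗m idm b) = lu' (a ⊗ b).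
Proof. rewrite <- assoc_lu, <- compA, assoc_invK, id_comp. reflexivity. Qed.

Lemma assoc_inv_triangle (a b : L) : ali a I b >> (ru' a ⊗m idm b) = idm a ⊗m lu' b.
Proof. rewrite <- triangle_eq, <- compA, assoc_invK, id_comp. reflexivity. Qed.

Lemma sym_lu (a : L) : sg a I >> lu' a = ru' a.
Proof.
  apply tens_unit_inj_r. symmetry.
  rewrite <- (comp_id (ru' a ⊗m idm I)), <- (comp_id ((sg a I >> lu' a) ⊗m idm I)).
  rewrite <- (symK a I), <- !compA. f_equal.
  pose proof (hexagon_eq a I I) as H. reassoc_in H.
  apply (f_equal (fun z => z >> lu' (I ⊗ a))) in H. reassoc_in H.
  transitivity (al a I I >> (sg a (I ⊗ I) >> (al I I a >> lu' (I ⊗ a)))).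
  { rewrite assoc_lu, <- sym_natural. arw (triangle_eq _ _). reflexivity. }
  rewrite H. arw (lu_natural _). arw (assoc_lu _ _).
  arw_rev (tens_comp _ _ _ _). rewrite id_comp. reflexivity.
Qed.

Lemma sym_ru (a : L) : sg I a >> ru' a = lu' a.
Proof. rewrite <- sym_lu, <- compA, symK, id_comp. reflexivity. Qed.

Lemma pentagon_inv_r (a b c d : L) :
  (idm a ⊗m al b c d) >> ali a b (c ⊗ d)
  = ali a (b ⊗ c) d >> ((ali a b c ⊗m idm d) >> al (a ⊗ b) c d).
Proof.
  pose proof (pentagon_eq a b c d) as H. reassoc_in H.
  rewrite <- (id_comp (idm a ⊗m al b c d)), <- (assoc_invK a (b ⊗ c) d). reassoc.
  rewrite <- (id_comp (al a (b ⊗ c) d >> _)), <- tens_id, <- (assoc_invK a b c),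
    tens_comp_id. reassoc.
  arw_rev H. arw (assocK a b (c ⊗ d)). rewrite comp_id. reflexivity.
Qed.

Lemma pentagon_inv_l (a b c d : L) :
  ali (a ⊗ b) c d >> ((al a b c ⊗m idm d) >> al a (b ⊗ c) d)
  = al a b (c ⊗ d) >> (idm a ⊗m ali b c d).
Proof.
  pose proof (pentagon_eq a b c d) as H. reassoc_in H.
  rewrite <- (comp_id (al a b c ⊗m idm d >> al a (b ⊗ c) d)), <- tens_id,
    <- (assocK b c d), tens_id_comp. reassoc.
  arw_rev H. arw (assoc_invK (a ⊗ b) c d). rewrite id_comp. reflexivity.
Qed.

End Monoidal.

Section MiddleSwap.
Context {L : Cat} {M : SMCData L} {HM : IsSMC M}.
Local Notation "a ⊗ b" := (tens M a b) (at level 35, right associativity).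
Local Notation "f ⊗m g" := (tensm M f g) (at level 35).
Local Notation al := (assoc M).
Local Notation ali := (assoc_inv M).
Local Notation sg := (sym M).

Definition middle_swap (a b : L) : hom ((a ⊗ a) ⊗ (b ⊗ b)) ((a ⊗ b) ⊗ (a ⊗ b)) :=
  al a a (b ⊗ b) >> ((idm a ⊗m ali a b b) >> ((idm a ⊗m (sg a b ⊗m idm b))
    >> ((idm a ⊗m al b a b) >> ali a b (a ⊗ b)))).

Lemma tens_conj_assoc (x x' a a' b : L) :
  (idm x ⊗m (sg x' a ⊗m idm a')) ⊗m idm b
  = al x ((x' ⊗ a) ⊗ a') b >> ((idm x ⊗m al (x' ⊗ a) a' b)
    >> ((idm x ⊗m (sg x' a ⊗m idm (a' ⊗ b)))
    >> ((idm x ⊗m ali (a ⊗ x') a' b) >> ali x ((a ⊗ x') ⊗ a') b))).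
Proof.
  symmetry. rewrite <- (tens_id a' b).
  arw_rev (tens_id_comp x (sg x' a ⊗m (idm a' ⊗m idm b)) (ali (a ⊗ x') a' b)).
  arw_rev (tens_id_comp x (al (x' ⊗ a) a' b)
             (sg x' a ⊗m (idm a' ⊗m idm b) >> ali (a ⊗ x') a' b)).
  arw_rev (assoc_natural (sg x' a) (idm a') (idm b)). rewrite assocK, comp_id.
  arw_rev (assoc_natural (idm x) (sg x' a ⊗m idm a') (idm b)).
  rewrite assocK, comp_id. reflexivity.
Qed.

Lemma middle_swap_tens_r (x a b : L) :
  ali (x ⊗ x) (a ⊗ a) b >> ((middle_swap x a ⊗m idm b) >> al (x ⊗ a) (x ⊗ a) b)
  = al x x ((a ⊗ a) ⊗ b) >> ((idm x ⊗m (idm x ⊗m al a a b)) >> ((idm x ⊗m ali x a (a ⊗ b))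
    >> ((idm x ⊗m (sg x a ⊗m idm (a ⊗ b))) >> ((idm x ⊗m al a x (a ⊗ b))
    >> ((idm x ⊗m (idm a ⊗m ali x a b)) >> ali x a ((x ⊗ a) ⊗ b)))))).
Proof.
  assert (Front :
    ali (x ⊗ x) (a ⊗ a) b >> ((al x x (a ⊗ a) ⊗m idm b) >> (((idm x ⊗m ali x a a) ⊗m idm b)
      >> (al x ((x ⊗ a) ⊗ a) b >> (idm x ⊗m al (x ⊗ a) a b))))
    = al x x ((a ⊗ a) ⊗ b) >> ((idm x ⊗m (idm x ⊗m al a a b)) >> (idm x ⊗m ali x a (a ⊗ b)))).
  { arw (assoc_natural (idm x) (ali x a a) (idm b)). arw (pentagon_inv_l x x (a ⊗ a) b).
    arw_rev (tens_id_comp x (idm x ⊗m al a a b) (ali x a (a ⊗ b))).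
    rewrite pentagon_inv_r, !tens_id_comp. reassoc. reflexivity. }
  assert (Back :
    (idm x ⊗m ali (a ⊗ x) a b) >> (ali x ((a ⊗ x) ⊗ a) b >> (((idm x ⊗m al a x a) ⊗m idm b)
      >> ((ali x a (x ⊗ a) ⊗m idm b) >> al (x ⊗ a) (x ⊗ a) b)))
    = (idm x ⊗m al a x (a ⊗ b)) >> ((idm x ⊗m (idm a ⊗m ali x a b)) >> ali x a ((x ⊗ a) ⊗ b))).
  { arw_rev (assoc_inv_natural_m x b (al a x a)). arw_rev (pentagon_inv_r x a (x ⊗ a) b).
    arw_rev (tens_id_comp x (al a x a ⊗m idm b) (al a (x ⊗ a) b)).
    arw_rev (tens_id_comp x (ali (a ⊗ x) a b) (al a x a ⊗m idm b >> al a (x ⊗ a) b)).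
    rewrite pentagon_inv_l, tens_id_comp. reassoc. reflexivity. }
  unfold middle_swap. rewrite !tens_comp_id. reassoc. rewrite tens_conj_assoc. reassoc.
  arw Front. rewrite Back. reflexivity.
Qed.

End MiddleSwap.

Section Additive.
Context {L : Cat} {M : SMCData L} {Z : AddData L} {HZ : IsAdditive M Z}.

Lemma zero_comp (a b c : L) (h : hom b c) : zero Z a b >> h = zero Z a c.
Proof. apply (comp_0l HZ). Qed.

Lemma comp_zero (a b c : L) (h : hom a b) : h >> zero Z b c = zero Z a c.
Proof. apply (comp_0r HZ). Qed.

Lemma tens_zero_r (a a' b b' : L) (f : hom a a') :
  tensm M f (zero Z b b') = zero Z (tens M a b) (tens M a' b').
Proof. apply (tensm_0r HZ). Qed.

End Additive.

(** * The LNL adjunction *)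

Section LNLTheory.
Variable G : LNL.
Local Notation C := (CC G).
Local Notation L := (LL G).
Local Notation "a ⊗ b" := (tens (Lsmc G) a b) (at level 35, right associativity).
Local Notation "f ⊗m g" := (tensm (Lsmc G) f g) (at level 35).
Local Notation al := (assoc (Lsmc G)).
Local Notation ali := (assoc_inv (Lsmc G)).
Local Notation lu' := (lu (Lsmc G)).
Local Notation ru' := (ru (Lsmc G)).
Local Notation sg := (sym (Lsmc G)).
Local Notation F := (FF G).
Local Notation U := (UU G).
Local Notation P := (Ccart G).
Local Notation "x × y" := (cprod (Ccart G) x y) (at level 34).
Local Notation m := (mm G).
Local Notation mi := (mm_inv G).

Lemma mmK (X Y : C) : m X Y >> mi X Y = idm _.
Proof. exact (mm_iso1 X Y). Qed.

Lemma mm_invK (X Y : C) : mi X Y >> m X Y = idm _.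
Proof. exact (mm_iso2 X Y). Qed.

Lemma mm_inv_natural (X X' Y Y' : C) (f : hom X X') (g : hom Y Y') :
  mi X Y >> (fmap F f ⊗m fmap F g) = fmap F (prodm P f g) >> mi X' Y'.
Proof.
  rewrite <- (comp_id (mi X Y >> _)), <- (mmK X' Y'). reassoc. arw (mm_nat f g).
  rewrite <- compA, mm_invK, id_comp. reflexivity.
Qed.

Lemma mm_natural_l (X X' Y : C) (f : hom X X') :
  (fmap F f ⊗m idm (F Y)) >> m X' Y = m X Y >> fmap F (prodm P f (idm Y)).
Proof. rewrite <- mm_nat, (functor_id F). reflexivity. Qed.

Lemma mm_natural_r (X Y Y' : C) (g : hom Y Y') :
  (idm (F X) ⊗m fmap F g) >> m X Y' = m X Y >> fmap F (prodm P (idm X) g).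
Proof. rewrite <- mm_nat, (functor_id F). reflexivity. Qed.

Lemma mm_inv_natural_l (X X' Y : C) (f : hom X X') :
  mi X Y >> (fmap F f ⊗m idm (F Y)) = fmap F (prodm P f (idm Y)) >> mi X' Y.
Proof. rewrite <- mm_inv_natural, (functor_id F). reflexivity. Qed.

Lemma mm_inv_natural_r (X Y Y' : C) (g : hom Y Y') :
  mi X Y >> (idm (F X) ⊗m fmap F g) = fmap F (prodm P (idm X) g) >> mi X Y'.
Proof. rewrite <- mm_inv_natural, (functor_id F). reflexivity. Qed.

Lemma mm_assoc_eq (X Y Z : C) :
  (m X Y ⊗m idm (F Z)) >> (m (X × Y) Z >> fmap F (cassoc P X Y Z))
  = al _ _ _ >> ((idm (F X) ⊗m m Y Z) >> m X (Y × Z)).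
Proof. pose proof (mm_assoc X Y Z) as H. reassoc_in H. exact H. Qed.

Lemma mm_assoc_inv_eq (X Y Z : C) :
  (idm (F X) ⊗m m Y Z) >> (m X (Y × Z) >> fmap F (cassoc_inv X Y Z))
  = ali _ _ _ >> ((m X Y ⊗m idm (F Z)) >> m (X × Y) Z).
Proof.
  rewrite <- (comp_id (m (X × Y) Z)), <- (functor_id F ((X × Y) × Z)), <- (cassocK X Y Z),
    (functor_comp F).
  arw (mm_assoc_eq X Y Z). arw (assoc_invK (F X) (F Y) (F Z)). rewrite id_comp.
  reflexivity.
Qed.

Lemma mm_inv_assoc (X Y Z : C) :
  (mi X Y ⊗m idm (F Z)) >> al _ _ _
  = m (X × Y) Z >> (fmap F (cassoc P X Y Z) >> (mi X (Y × Z) >> (idm (F X) ⊗m mi Y Z))).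
Proof.
  assert (E : al (F X) (F Y) (F Z)
              = (m X Y ⊗m idm (F Z)) >> (m (X × Y) Z >> (fmap F (cassoc P X Y Z)
                  >> (mi X (Y × Z) >> (idm (F X) ⊗m mi Y Z))))).
  { arw (mm_assoc_eq X Y Z). arw (mmK _ _). rewrite id_comp.
    rewrite <- tens_comp, mmK, id_comp, tens_id, comp_id. reflexivity. }
  rewrite E. arw_rev (tens_comp (mi X Y) (m X Y) (idm (F Z)) (idm (F Z))).
  rewrite mm_invK, id_comp, tens_id, id_comp. reflexivity.
Qed.

Lemma cX_natural (X Y : C) (f : hom X Y) :
  fmap F f >> cX Y = cX X >> (fmap F f ⊗m fmap F f).
Proof.
  unfold cX. reassoc. rewrite mm_inv_natural, <- !compA, <- !(functor_comp F).
  f_equal. f_equal. cart.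
Qed.

Lemma wX_natural (X Y : C) (f : hom X Y) : fmap F f >> wX Y = wX X.
Proof.
  unfold wX. rewrite <- compA, <- (functor_comp F). f_equal. f_equal. apply term_hom_eq.
Qed.

Lemma cX_counit_l (X : C) : cX X >> ((wX X ⊗m idm (F X)) >> lu' (F X)) = idm (F X).
Proof.
  unfold cX, wX. rewrite <- (mm_lunit X), tens_comp_id. reassoc.
  arw_rev (tens_comp (m1_inv G) (m1 G) (idm (F X)) (idm (F X))).
  rewrite (m1_iso2 G), id_comp, tens_id, id_comp.
  arw (mm_inv_natural_l X (bang P X)). arw (mm_invK _ _). rewrite id_comp.
  rewrite <- !(functor_comp F), <- (functor_id F). f_equal. cart.
Qed.

Lemma cX_counit_r (X : C) : cX X >> ((idm (F X) ⊗m wX X) >> ru' (F X)) = idm (F X).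
Proof.
  unfold cX, wX. rewrite <- (mm_runit X), tens_id_comp. reassoc.
  arw_rev (tens_comp (idm (F X)) (idm (F X)) (m1_inv G) (m1 G)).
  rewrite (m1_iso2 G), id_comp, tens_id, id_comp.
  arw (mm_inv_natural_r X (bang P X)). arw (mm_invK _ _). rewrite id_comp.
  rewrite <- !(functor_comp F), <- (functor_id F). f_equal. cart.
Qed.

Lemma cX_coassoc (X : C) :
  cX X >> ((cX X ⊗m idm (F X)) >> al _ _ _) = cX X >> (idm (F X) ⊗m cX X).
Proof.
  unfold cX. rewrite tens_comp_id, tens_id_comp. reassoc.
  arw (mm_inv_assoc X X X). arw (mm_natural_l X (diag P X)).
  arw (mm_invK _ _). rewrite id_comp. arw (mm_inv_natural_r X (diag P X)).
  rewrite <- !compA, <- !(functor_comp F). do 3 f_equal. unfold cassoc, diag. cart.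
Qed.

Lemma cX_counit_l_tens (X : C) (A : L) :
  (cX X ⊗m idm A) >> (al _ _ A >> ((wX X ⊗m idm (F X ⊗ A)) >> lu' _)) = idm _.
Proof.
  rewrite <- tens_id. arw_rev (assoc_natural (wX X) (idm (F X)) (idm A)).
  arw (assoc_lu (F X) A). rewrite <- !tens_comp, !id_comp, cX_counit_l, tens_id.
  reflexivity.
Qed.

Lemma cX_counit_r_tens (X : C) (A : L) :
  (cX X ⊗m idm A) >> (al _ _ A >> (idm (F X) ⊗m ((wX X ⊗m idm A) >> lu' A))) = idm _.
Proof.
  rewrite tens_id_comp. arw_rev (assoc_natural (idm (F X)) (wX X) (idm A)).
  arw (triangle_eq (F X) A). rewrite <- !tens_comp, !id_comp, cX_counit_r, tens_id.
  reflexivity.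
Qed.

Lemma cX_coassoc_tens (X : C) (A : L) :
  (cX X ⊗m idm A) >> (al _ _ A >> ((cX X ⊗m idm (F X ⊗ A)) >> al _ _ _))
  = (cX X ⊗m idm A) >> (al _ _ A >> ((idm (F X) ⊗m (cX X ⊗m idm A))
      >> (idm (F X) ⊗m al _ _ A))).
Proof.
  arw (assoc_natural_l (F X) A (cX X)). arw (pentagon_eq (F X) (F X) (F X) A).
  arw_rev (tens_comp (cX X) (cX X ⊗m idm (F X)) (idm A) (idm A)). rewrite id_comp.
  arw_rev (tens_comp (cX X >> (cX X ⊗m idm (F X))) (al (F X) (F X) (F X)) (idm A) (idm A)).
  rewrite id_comp. reassoc. rewrite cX_coassoc, tens_comp_id. reassoc.
  arw_rev (assoc_natural_m (F X) A (cX X)). reflexivity.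
Qed.

Lemma mm_middle_swap (X Y : C) :
  middle_swap (F X) (F Y) >> ((m X Y ⊗m m X Y) >> m (X × Y) (X × Y))
  = (m X X ⊗m m Y Y) >> (m _ _ >> fmap F (cmiddle_swap X Y)).
Proof.
  unfold middle_swap. reassoc. rewrite (tens_split_rl (m X Y) (m X Y)). reassoc.
  arw_rev (assoc_inv_natural_r (F X) (F Y) (m X Y)).
  arw_rev (mm_assoc_inv_eq X Y (X × Y)).
  arw_rev (tens_comp (idm (F X)) (idm (F X)) (al (F Y) (F X) (F Y)) (idm (F Y) ⊗m m X Y)).
  rewrite id_comp.
  arw_rev (tens_comp (idm (F X)) (idm (F X)) (al (F Y) (F X) (F Y) >> (idm (F Y) ⊗m m X Y))
                     (m Y (X × Y))).
  rewrite id_comp. reassoc. rewrite <- (mm_assoc_eq Y X Y).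
  arw_rev (tens_comp (idm (F X)) (idm (F X)) (sg (F X) (F Y) ⊗m idm (F Y))
             (m Y X ⊗m idm (F Y) >> (m (Y × X) Y >> fmap F (cassoc P Y X Y)))).
  rewrite id_comp.
  arw_rev (tens_comp (sg (F X) (F Y)) (m Y X) (idm (F Y)) (idm (F Y))). rewrite id_comp.
  rewrite <- mm_sym, tens_comp_id. reassoc. arw (mm_natural_l Y (cswap P X Y)).
  arw_rev (tens_comp (idm (F X)) (idm (F X)) (ali (F X) (F Y) (F Y)) _). rewrite id_comp.
  arw_rev (mm_assoc_inv_eq X Y Y).
  rewrite <- !(functor_comp F), !tens_id_comp. reassoc.
  arw (assoc_natural_r (F X) (F X) (m Y Y)).
  arw (mm_natural_r X (cassoc_inv X Y Y >> (prodm P (cswap P X Y) (idm Y)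
                                                >> cassoc P Y X Y))).
  arw_rev (mm_assoc_eq X X (Y × Y)).
  arw_rev (tens_split_rl (m X X) (m Y Y)).
  rewrite <- !(functor_comp F). do 3 f_equal.
  unfold cassoc, cassoc_inv, cmiddle_swap, cswap, prodm. cart.
Qed.

Lemma mm_cX (X Y : C) :
  m X Y >> cX (X × Y)
  = (cX X ⊗m cX Y) >> (middle_swap (F X) (F Y) >> (m X Y ⊗m m X Y)).
Proof.
  rewrite <- (comp_id (m X Y ⊗m m X Y)), <- (mmK (X × Y) (X × Y)). reassoc.
  arw (mm_middle_swap X Y). unfold cX. rewrite tens_comp. reassoc.
  arw_rev (tens_comp (mi X X) (m X X) (mi Y Y) (m Y Y)).
  rewrite !mm_invK, tens_id, id_comp.
  arw (mm_nat (diag P X) (diag P Y)). arw_rev (functor_comp F _ _).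
  do 3 f_equal. unfold cmiddle_swap, diag, prodm. cart.
Qed.

Definition id_x_eta (X : C) (A : L) : hom (X × U A) (X × U (bangL A)) :=
  prodm P (idm X) (eta G (U A)).

Lemma mm_id_x_eta (X : C) (A : L) :
  m X (U A) >> fmap F (id_x_eta X A) = (idm _ ⊗m pcomul A) >> m X (U (bangL A)).
Proof. unfold id_x_eta, pcomul. symmetry. apply mm_natural_r. Qed.

End LNLTheory.

(** * The category LS(C) *)

Section LSCategory.
Variable G : LNL.
Local Notation C := (CC G).
Local Notation L := (LL G).
Local Notation "a ⊗ b" := (tens (Lsmc G) a b) (at level 35, right associativity).
Local Notation "f ⊗m g" := (tensm (Lsmc G) f g) (at level 35).
Local Notation al := (assoc (Lsmc G)).
Local Notation ali := (assoc_inv (Lsmc G)).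
Local Notation lu' := (lu (Lsmc G)).
Local Notation sg := (sym (Lsmc G)).
Local Notation F := (FF G).
Local Notation U := (UU G).
Local Notation "x × y" := (cprod (Ccart G) x y) (at level 34).

Lemma LScomp_fst (X Y W : C) (A B D : L) (p : LSHom X A Y B) (q : LSHom Y B W D) :
  fst (LScomp p q) = fst p >> fst q.
Proof. reflexivity. Qed.

Lemma LScomp_snd (X Y W : C) (A B D : L) (p : LSHom X A Y B) (q : LSHom Y B W D) :
  snd (LScomp p q) = (cX X ⊗m idm A) >> (al _ _ A >> ((fmap F (fst p) ⊗m snd p) >> snd q)).
Proof. unfold LScomp. simpl. reassoc. reflexivity. Qed.

Lemma LScomp_snd_congr (X Y W W' : C) (A B D : L) (p : LSHom X A Y B)
    (q : LSHom Y B W D) (q' : LSHom Y B W' D) :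
  snd q = snd q' -> snd (LScomp p q) = snd (LScomp p q').
Proof. intro E. rewrite !LScomp_snd, E. reflexivity. Qed.

Lemma LScompA (X Y Z W : C) (A B D E : L) (p : LSHom X A Y B) (q : LSHom Y B Z D)
    (r : LSHom Z D W E) :
  LScomp (LScomp p q) r = LScomp p (LScomp q r).
Proof.
  destruct p as [fp up], q as [fq uq], r as [fr ur]. unfold LScomp; simpl.
  f_equal; [apply compA|]. reassoc.
  rewrite (tens_split_rl (fmap F fp) up). reassoc.
  arw_rev (tens_comp (fmap F fp) (cX Y) (idm B) (idm B)).
  rewrite cX_natural, id_comp, tens_comp_id. reassoc.
  arw_rev (tens_interchange (cX X) up).
  arw_rev (tens_comp (idm (F X ⊗ F X)) (fmap F fp ⊗m fmap F fp) up (idm B)).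
  rewrite id_comp, comp_id.
  arw (assoc_natural (fmap F fp) (fmap F fp) up).
  arw_rev (tens_comp (fmap F fp) (fmap F fq) (fmap F fp ⊗m up) uq).
  arw (cX_coassoc_tens X A). rewrite (functor_comp F).
  rewrite (tens_comp_r_late (fmap F fp >> fmap F fq) (cX X ⊗m idm A)).
  rewrite (tens_comp_r_late (fmap F fp >> fmap F fq) (al (F X) (F X) A)).
  rewrite (tens_split_rl (fmap F fp) up). reassoc. reflexivity.
Qed.

Lemma LScomp_counit (X Y : C) (A B : L) (fp : hom X Y) (up : hom (F X ⊗ A) B) :
  (cX X ⊗m idm A) >> (al _ _ A >> ((fmap F fp ⊗m up) >> ((wX Y ⊗m idm B) >> lu' B))) = up.
Proof.
  arw_rev (tens_comp (fmap F fp) (wX Y) up (idm B)).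
  rewrite wX_natural, comp_id, (tens_split_lr (wX X) up). reassoc.
  arw (lu_natural up). arw (cX_counit_l_tens X A). apply id_comp.
Qed.

Lemma LSid_comp (X Y : C) (A B : L) (q : LSHom X A Y B) : LScomp (LSid X A) q = q.
Proof.
  destruct q as [fq uq]. unfold LScomp, LSid; simpl. f_equal; [apply id_comp|].
  rewrite (functor_id F). reassoc. arw (cX_counit_r_tens X A). apply id_comp.
Qed.

Lemma LScomp_id (X Y : C) (A B : L) (p : LSHom X A Y B) : LScomp p (LSid Y B) = p.
Proof.
  destruct p as [fp up]. unfold LScomp, LSid; simpl. f_equal; [apply comp_id|].
  reassoc. apply LScomp_counit.
Qed.

Lemma lift_snd_comp (X : C) (A B : L) (g : hom A B) :
  (wX X ⊗m g) >> lu' B = ((wX X ⊗m idm A) >> lu' A) >> g.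
Proof. rewrite tens_split_lr. reassoc. rewrite lu_natural. reflexivity. Qed.

Lemma LScomp_lift_r (X Y : C) (A B D : L) (p : LSHom X A Y B) (g : hom B D) :
  LScomp p (lift Y g) = (fst p >> idm Y, snd p >> g).
Proof.
  destruct p as [fp up]. unfold LScomp, lift; simpl. f_equal.
  rewrite lift_snd_comp. reassoc. arw (LScomp_counit fp up). reflexivity.
Qed.

Lemma LScomp_lift_l (X Y : C) (A A' B : L) (g : hom A A') (q : LSHom X A' Y B) :
  LScomp (lift X g) q = (idm X >> fst q, (idm (F X) ⊗m g) >> snd q).
Proof.
  destruct q as [fq uq]. unfold LScomp, lift; simpl. f_equal.
  rewrite (functor_id F), (tens_split_rl (wX X) g), !tens_id_comp. reassoc.
  arw (assoc_natural_r (F X) (F X) g). arw (tens_interchange (cX X) g).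
  arw_rev (tens_id_comp (F X) (wX X ⊗m idm A') (lu' A')).
  arw (cX_counit_r_tens X A'). rewrite id_comp. reflexivity.
Qed.

Lemma lift_comp (X : C) (A B D : L) (f : hom A B) (g : hom B D) :
  LScomp (lift X f) (lift X g) = lift X (f >> g).
Proof.
  rewrite LScomp_lift_l. unfold lift; simpl. f_equal; [apply id_comp|].
  arw_rev (tens_comp (idm (F X)) (wX X) f g). rewrite id_comp. reflexivity.
Qed.

Lemma Sigma_mu (X : C) (A B D : L) (d : hom (F (X × U A) ⊗ B) D) :
  LScomp (Sigma d) (mu X A D)
  = (idm X >> idm X, ali (F X) (bangL A) B >> ((mm G X (U A) ⊗m idm B) >> d)).
Proof.
  unfold mu. rewrite LScomp_lift_r. unfold Sigma. cbn [fst snd]. f_equal. reassoc.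
  arw_rev (tens_interchange (wA A) ((mm G X (U A) ⊗m idm B) >> d)). arw (lu_natural _).
  arw_rev (tens_interchange (wA A) (ali (F X) (bangL A) B)). arw (lu_natural _).
  arw (assoc_natural_l (F X) (bangL A ⊗ B) (wA A)). arw (assoc_lu (F X) (bangL A ⊗ B)).
  arw_rev (tens_comp (sg (F X) (bangL A)) (wA A ⊗m idm (F X)) (idm (bangL A ⊗ B)) (idm _)).
  arw_rev (tens_comp (sg (F X) (bangL A) >> (wA A ⊗m idm (F X))) (lu' (F X))
             (idm (bangL A ⊗ B) >> idm _) (idm _)).
  rewrite !id_comp. reassoc.
  arw_rev (sym_natural (idm (F X)) (wA A)). rewrite sym_lu, tens_comp_l_late. reassoc.
  arw_rev (assoc_inv_natural_m (F X) (bangL A ⊗ B) (wA A)).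
  arw (assoc_inv_triangle (F X) (bangL A ⊗ B)).
  arw_rev (tens_id_comp (F X) (wA A ⊗m idm (bangL A ⊗ B)) (lu' (bangL A ⊗ B))).
  arw_rev (tens_id_comp (F X) (al (bangL A) (bangL A) B)
             ((wA A ⊗m idm (bangL A ⊗ B)) >> lu' (bangL A ⊗ B))).
  arw_rev (tens_id_comp (F X) (cA A ⊗m idm B) (al (bangL A) (bangL A) B
             >> ((wA A ⊗m idm (bangL A ⊗ B)) >> lu' (bangL A ⊗ B)))).
  unfold cA, wA, bangL. rewrite cX_counit_l_tens, tens_id, id_comp. reflexivity.
Qed.

Lemma fibtens_lift_l (X : C) (A A' B B' : L) (f : hom A A') (q : LSHom X B X B') :
  fibtens (lift X f) q
  = (idm X, ali (F X) A B >> ((sg (F X) A ⊗m idm B) >> (al A (F X) B >> (f ⊗m snd q)))).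
Proof.
  unfold fibtens, lift. cbn [snd]. f_equal. reassoc.
  rewrite tens_comp_l_late, (tens_split_lr (lu' A') (snd q)). reassoc.
  arw_rev (assoc_inv_natural (wX X) f (idm (F X ⊗ B))). arw (assoc_inv_lu A' (F X ⊗ B)).
  rewrite (tens_split_lr (wX X) (f ⊗m idm (F X ⊗ B))). reassoc.
  arw (lu_natural (f ⊗m idm (F X ⊗ B))).
  arw_rev (tens_interchange (wX X) (al A (F X) B)).
  arw_rev (tens_interchange (wX X) (sg (F X) A ⊗m idm B)).
  arw_rev (tens_interchange (wX X) (ali (F X) A B)).
  arw (lu_natural (al A (F X) B)).
  arw (lu_natural (sg (F X) A ⊗m idm B)).
  arw (lu_natural (ali (F X) A B)).
  arw (cX_counit_l_tens X (A ⊗ B)). rewrite id_comp.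
  arw_rev (tens_comp f (idm A') (idm (F X ⊗ B)) (snd q)). rewrite id_comp, comp_id.
  reflexivity.
Qed.

Lemma fibtens_lift_id (X : C) (A A' B : L) (f : hom A A') :
  fibtens (lift X f) (LSid X B) = lift X (f ⊗m idm B).
Proof.
  rewrite fibtens_lift_l. unfold lift, LSid. cbn [snd]. f_equal.
  rewrite (tens_split_rl f), tens_id_comp. reassoc.
  arw (assoc_natural_m A B (wX X)). arw (triangle_eq A B).
  arw_rev (tens_comp (sg (F X) A) (idm A ⊗m wX X) (idm B) (idm B)).
  arw_rev (tens_comp (sg (F X) A >> (idm A ⊗m wX X)) (ru (Lsmc G) A) (idm B >> idm B) (idm B)).
  rewrite !id_comp. reassoc. arw_rev (sym_natural (wX X) (idm A)).
  rewrite sym_ru, tens_comp_l_late. reassoc.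
  arw_rev (assoc_inv_natural (wX X) (idm A) (idm B)). arw (assoc_inv_lu A B).
  rewrite tens_id, lift_snd_comp. reassoc. reflexivity.
Qed.

Lemma castLS_snd (X Y : C) (A A' B B' : L) (e1 : A = A') (e2 : B = B') (h : LSHom X A Y B) :
  snd (castLS e1 e2 h) = (idm (F X) ⊗m eq_hom (eq_sym e1)) >> (snd h >> eq_hom e2).
Proof. destruct e1, e2. simpl. rewrite tens_id, id_comp, comp_id. reflexivity. Qed.

Lemma castLS_comp_l (X Y Z : C) (A A' B D : L) (e1 : A = A') (p : LSHom X A Y B)
    (q : LSHom Y B Z D) :
  LScomp (castLS e1 eq_refl p) q = castLS e1 eq_refl (LScomp p q).
Proof. destruct e1. reflexivity. Qed.

Lemma brace_lift (X : C) (A B : L) (g : hom A B) :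
  brace (idm X) ((wX X ⊗m g) >> lu' B) = prodm (Ccart G) (idm X) (fmap U g).
Proof.
  unfold brace. unfold prodm at 2. f_equal.
  rewrite (functor_comp U). reassoc. arw_rev (nn_nat (wX X) g).
  unfold wX. rewrite !(functor_comp U). reassoc. arw (prodm_comp _ _ _ _).
  rewrite <- (compA (eta G X)), <- (eta_nat (bang (Ccart G) X)), id_comp, (eta_mon1 G).
  reassoc. rewrite <- (functor_comp U), (m1_iso1 G), (functor_id U), comp_id.
  replace (prodm (Ccart G) (bang (Ccart G) X >> n1 G) (fmap U g))
    with (prodm (Ccart G) (bang (Ccart G) X) (fmap U g) >> prodm (Ccart G) (n1 G) (idm (U B)))
    by cart.
  reassoc. pose proof (nn_lunit B) as H. reassoc_in H. rewrite H. cart.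
Qed.

End LSCategory.

(** * The tangent functor T *)

Section Tangent.
Variables (G : LNL) (T : GData G) (HT : IsGDSC T).
Local Notation C := (CC G).
Local Notation L := (LL G).
Local Notation "a ⊗ b" := (tens (Lsmc G) a b) (at level 35, right associativity).
Local Notation "f ⊗m g" := (tensm (Lsmc G) f g) (at level 35).
Local Notation al := (assoc (Lsmc G)).
Local Notation F := (FF G).
Local Notation P := (Ccart G).
Local Notation "x × y" := (cprod (Ccart G) x y) (at level 34).
Local Notation p1 := (cpr1 P).
Local Notation p2 := (cpr2 P).
Local Notation Q := (Lprod T).
Local Notation q1 := (cpr1 Q).
Local Notation q2 := (cpr2 Q).
Local Notation Z := (zero (Ladd T)).

Lemma LScomp_LSpair (V W X Y : C) (E D A B : L) (p : LSHom V E W D)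
    (q : LSHom W D X A) (r : LSHom W D Y B) :
  LScomp p (LSpair T q r) = LSpair T (LScomp p q) (LScomp p r).
Proof.
  destruct p as [fp up], q as [fq uq], r as [fr ur]. unfold LScomp, LSpair; simpl.
  f_equal; [apply comp_cpair|]. reassoc. rewrite !comp_cpair. reflexivity.
Qed.

Lemma phi_inv_fst (X Y : C) : fst (phi_inv T X Y) = idm _.
Proof.
  pose proof (phi_iso1 HT X Y) as H. apply (f_equal fst) in H. simpl in H.
  rewrite cpair_pr, id_comp in H. exact H.
Qed.

Lemma i2_fst (X Y : C) : fst (i2 T X Y) = idm _.
Proof. unfold i2. rewrite LScomp_fst, phi_inv_fst. apply id_comp. Qed.

Lemma phi_inv_T_pr1 (X Y : C) :
  snd (LScomp (phi_inv T X Y) (Tmor T (p1 X Y))) = snd (lift (X × Y) (q1 (lam T X) (lam T Y))).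
Proof.
  transitivity (snd (LScomp (phi_inv T X Y)
                   (LScomp (phi T X Y) (lift (X × Y) (q1 (lam T X) (lam T Y)))))).
  { apply LScomp_snd_congr. rewrite LScomp_lift_r. simpl. rewrite pair_pr1. reflexivity. }
  rewrite <- LScompA, (phi_iso2 HT X Y), LSid_comp. reflexivity.
Qed.

Lemma phi_inv_T_pr2 (X Y : C) :
  snd (LScomp (phi_inv T X Y) (Tmor T (p2 X Y))) = snd (lift (X × Y) (q2 (lam T X) (lam T Y))).
Proof.
  transitivity (snd (LScomp (phi_inv T X Y)
                   (LScomp (phi T X Y) (lift (X × Y) (q2 (lam T X) (lam T Y)))))).
  { apply LScomp_snd_congr. rewrite LScomp_lift_r. simpl. rewrite pair_pr2. reflexivity. }
  rewrite <- LScompA, (phi_iso2 HT X Y), LSid_comp. reflexivity.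
Qed.

Lemma i2_T_pr1 (X Y : C) : snd (LScomp (i2 T X Y) (Tmor T (p1 X Y))) = Z _ _.
Proof.
  unfold i2. rewrite LScompA, LScomp_lift_l. cbn [snd].
  rewrite phi_inv_T_pr1. unfold lift. cbn [snd].
  arw_rev (tens_comp (idm (F (X × Y))) (wX (X × Y)) (inj2 T (lam T X) (lam T Y)) (q1 _ _)).
  unfold inj2. rewrite id_comp, pair_pr1, tens_zero_r, zero_comp. reflexivity.
Qed.

Lemma i2_T_pr2 (X Y : C) :
  snd (LScomp (i2 T X Y) (Tmor T (p2 X Y))) = snd (LSid (X × Y) (lam T Y)).
Proof.
  unfold i2. rewrite LScompA, LScomp_lift_l. cbn [snd].
  rewrite phi_inv_T_pr2. unfold lift. cbn [snd].
  arw_rev (tens_comp (idm (F (X × Y))) (wX (X × Y)) (inj2 T (lam T X) (lam T Y)) (q2 _ _)).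
  unfold inj2. rewrite id_comp, pair_pr2. reflexivity.
Qed.

(* Through φ⁻¹, i2;T(g) is the pairing of its two components; the first one vanishes,
   so the pairing factors through ι2, and ι2;φ⁻¹ = i2. *)
Lemma i2_T_comp_snd (X Y X' W V : C) (B : L) (g : hom (X × Y) (X' × W))
    (K : LSHom (X' × W) (lam T (X' × W)) V B) :
  snd (LScomp (i2 T X Y) (Tmor T (g >> p1 X' W))) = Z _ _ ->
  snd (LScomp (LScomp (i2 T X Y) (Tmor T g)) K)
  = (cX (X × Y) ⊗m idm _) >> (al _ _ _ >> ((fmap F g
      ⊗m snd (LScomp (i2 T X Y) (Tmor T (g >> p2 X' W)))) >> snd (LScomp (i2 T X' W) K))).
Proof.
  intro Hconst.
  assert (E : LScomp (i2 T X Y) (Tmor T g)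
              = LScomp (LSpair T (LScomp (i2 T X Y) (Tmor T (g >> p1 X' W)))
                                 (LScomp (i2 T X Y) (Tmor T (g >> p2 X' W))))
                       (phi_inv T X' W)).
  { rewrite <- (LScomp_id (LScomp (i2 T X Y) (Tmor T g))), <- (phi_iso1 HT X' W),
      <- LScompA.
    f_equal. unfold phi. rewrite !LScompA, LScomp_LSpair, <- !(T_comp HT), LScomp_LSpair.
    reflexivity. }
  rewrite E, LScompA, LScomp_snd. unfold LSpair. cbn [fst snd].
  rewrite Hconst, !LScomp_fst, i2_fst. cbn [Tmor fst].
  rewrite !id_comp, <- comp_cpair, cpair_pr, comp_id.
  assert (E2 : cpair Q (Z (F (X × Y) ⊗ lam T Y) (lam T X'))
                       (snd (LScomp (i2 T X Y) (Tmor T (g >> p2 X' W))))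
               = snd (LScomp (i2 T X Y) (Tmor T (g >> p2 X' W))) >> inj2 T _ _).
  { unfold inj2. rewrite comp_cpair, comp_zero, comp_id. reflexivity. }
  assert (E3 : snd (LScomp (i2 T X' W) K)
               = (idm _ ⊗m inj2 T _ _) >> snd (LScomp (phi_inv T X' W) K)).
  { unfold i2. rewrite LScompA, LScomp_lift_l. reflexivity. }
  rewrite E2, E3, tens_comp_r_early. reassoc. reflexivity.
Qed.

End Tangent.

Section ChainRule.
Variables (G : LNL) (T : GData G) (HT : IsGDSC T).
Local Notation C := (CC G).
Local Notation L := (LL G).
Local Notation "a ⊗ b" := (tens (Lsmc G) a b) (at level 35, right associativity).
Local Notation "f ⊗m g" := (tensm (Lsmc G) f g) (at level 35).
Local Notation al := (assoc (Lsmc G)).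
Local Notation ali := (assoc_inv (Lsmc G)).
Local Notation lu' := (lu (Lsmc G)).
Local Notation sg := (sym (Lsmc G)).
Local Notation m := (mm G).
Local Notation F := (FF G).
Local Notation U := (UU G).
Local Notation P := (Ccart G).
Local Notation "x × y" := (cprod (Ccart G) x y) (at level 34).
Local Notation p1 := (cpr1 P).
Local Notation p2 := (cpr2 P).
Local Notation eta := (eta G).
Local Notation e_ A := (lamU T A).

(* (t.3) applied to the linear map (id_X, w_X ⊗ g), whose bracket is id × U g. *)
Lemma i2_T_prodm_U (X : C) (A B : L) (g : hom A B) :
  snd (LScomp (LScomp (i2 T X (U A)) (Tmor T (prodm P (idm X) (fmap U g))))
              (Tmor T (p2 X (U B))))
  = (idm _ ⊗m eq_hom (e_ A)) >> (((wX (X × U A) ⊗m g) >> lu' B) >> eq_hom (eq_sym (e_ B))).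
Proof.
  pose proof (t3 HT (idm X) ((wX X ⊗m g) >> lu' B)) as H. rewrite brace_lift in H.
  apply (f_equal (fun q => snd (LScomp q (Tmor T (p2 X (U B)))))) in H. cbv beta in H.
  unfold i2U in H. rewrite LScompA, !castLS_comp_l, castLS_snd in H. cbn [eq_hom] in H.
  rewrite comp_id in H.
  assert (E : snd (castLS (e_ B) eq_refl (LScomp (i2 T X (U B)) (Tmor T (p2 X (U B)))))
              = snd (lift (X × U B) (eq_hom (eq_sym (e_ B))))).
  { rewrite castLS_snd, (i2_T_pr2 HT). cbn [eq_hom]. rewrite comp_id. unfold LSid, lift.
    cbn [snd].
    arw_rev (tens_comp (idm (F (X × U B))) (wX (X × U B)) (eq_hom (eq_sym (e_ B))) (idm _)).
    rewrite id_comp, comp_id. reflexivity. }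
  rewrite (LScomp_snd_congr _ E), LScomp_lift_r in H. unfold Wmor in H. cbn [snd] in H.
  reassoc_in H. rewrite <- (compA (fmap F (p1 X (U A)) ⊗m idm A)), <- tens_comp,
    wX_natural, id_comp in H.
  reassoc. rewrite H, <- compA, <- tens_comp, id_comp, eq_homK, tens_id, id_comp.
  reflexivity.
Qed.

Lemma i2_T_comp_U (X : C) (A B B' : L) (h : hom (X × U A) (U B)) (g : hom B B') :
  snd (LScomp (i2 T X (U A)) (Tmor T (h >> fmap U g)))
  = snd (LScomp (i2 T X (U A)) (Tmor T h))
    >> (eq_hom (e_ B) >> (g >> eq_hom (eq_sym (e_ B')))).
Proof.
  assert (Eh : h >> fmap U g
               = cpair P (p1 _ _) h >> (prodm P (idm X) (fmap U g) >> p2 X (U B'))).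
  { cart. }
  assert (Hconst : snd (LScomp (i2 T X (U A)) (Tmor T (cpair P (p1 _ _) h >> p1 X (U B))))
                   = zero (Ladd T) _ _).
  { rewrite pair_pr1. apply (i2_T_pr1 HT). }
  rewrite Eh, !(T_comp HT), <- LScompA, (i2_T_comp_snd HT _ Hconst), pair_pr2,
    <- (LScompA (i2 T X (U B))), i2_T_prodm_U.
  set (d := snd (LScomp (i2 T X (U A)) (Tmor T h))).
  arw_rev (tens_comp (fmap F (cpair P (p1 _ _) h)) (idm _) d (eq_hom (e_ B))).
  rewrite comp_id.
  arw_rev (tens_comp (fmap F (cpair P (p1 _ _) h)) (wX _) (d >> eq_hom (e_ B)) g).
  rewrite wX_natural. arw (lift_snd_comp (X × U A) _).
  arw (cX_counit_l_tens (X × U A) (lam T (U A))). rewrite id_comp. reflexivity.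
Qed.

Definition D2_eta (X : C) (A : L) : hom (F (X × U A) ⊗ lam T (U A)) (lam T (U (bangL A))) :=
  snd (LScomp (i2 T X (U A)) (Tmor T (p2 X (U A) >> eta (U A)))).

Lemma D2_eta_chain_rule (X : C) (A : L) :
  D2_eta X A >> (eq_hom (e_ (bangL A)) >> (pcomul A >> eq_hom (eq_sym (e_ (bangL (bangL A))))))
  = (cX (X × U A) ⊗m idm _)
    >> (al _ _ _ >> ((fmap F (id_x_eta X A) ⊗m D2_eta X A) >> D2_eta X (bangL A))).
Proof.
  assert (Efact : (p2 X (U A) >> eta (U A)) >> fmap U (pcomul A)
                  = id_x_eta X A >> (p2 X (U (bangL A)) >> eta (U (bangL A)))).
  { unfold id_x_eta, pcomul. reassoc. arw (prodm_pr2 _ _). f_equal.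
    symmetry. apply eta_nat. }
  assert (Hconst : snd (LScomp (i2 T X (U A)) (Tmor T (id_x_eta X A >> p1 X (U (bangL A)))))
                   = zero (Ladd T) _ _).
  { unfold id_x_eta. rewrite prodm_pr1, comp_id. apply (i2_T_pr1 HT). }
  unfold D2_eta at 1. rewrite <- i2_T_comp_U.
  transitivity (snd (LScomp (i2 T X (U A)) (Tmor T (id_x_eta X A
                      >> (p2 X (U (bangL A)) >> eta (U (bangL A))))))).
  { f_equal. f_equal. f_equal. exact Efact. }
  rewrite (T_comp HT), <- LScompA, (i2_T_comp_snd HT _ Hconst).
  unfold id_x_eta at 2. rewrite prodm_pr2. reflexivity.
Qed.

Lemma scrD_snd (X : C) (A : L) :
  snd (scrD T X A)
  = (idm _ ⊗m eq_hom (eq_sym (e_ A))) >> (D2_eta X A >> eq_hom (e_ (bangL A))).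
Proof. unfold scrD. rewrite castLS_snd. reflexivity. Qed.

Lemma scrD_chain_rule (X : C) (A : L) :
  snd (scrD T X A) >> pcomul A
  = (cX (X × U A) ⊗m idm A)
    >> (al _ _ _ >> ((fmap F (id_x_eta X A) ⊗m snd (scrD T X A)) >> snd (scrD T X (bangL A)))).
Proof.
  rewrite !scrD_snd. reassoc.
  rewrite <- (comp_id (pcomul A)), <- (eq_hom_symK (e_ (bangL (bangL A)))). reassoc.
  arw (D2_eta_chain_rule X A).
  arw_rev (tens_comp (fmap F (id_x_eta X A)) (idm _) _ (eq_hom (eq_sym (e_ (bangL A))))).
  rewrite comp_id. reassoc.
  rewrite eq_homK, comp_id, (tens_comp_r_late (fmap F (id_x_eta X A))). reassoc.
  arw (assoc_natural_r (F (X × U A)) (F (X × U A)) (eq_hom (eq_sym (e_ A)))).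
  arw (tens_interchange (cX (X × U A)) (eq_hom (eq_sym (e_ A)))). reflexivity.
Qed.

Lemma deriv_chain_rule_snd (X : C) (A : L) :
  ali (F X) (bangL A) A >> ((m X (U A) ⊗m idm A) >> (snd (scrD T X A) >> pcomul A))
  = (cX X ⊗m idm (bangL A ⊗ A))
    >> (al (F X) (F X) (bangL A ⊗ A)
    >> ((idm (F X) ⊗m ((idm (F X) ⊗m ((cA A ⊗m idm A) >> al (bangL A) (bangL A) A))
          >> (ali (F X) (bangL A) (bangL A ⊗ A)
          >> ((sg (F X) (bangL A) ⊗m idm (bangL A ⊗ A))
          >> (al (bangL A) (F X) (bangL A ⊗ A)
          >> (pcomul A ⊗m (ali (F X) (bangL A) A
                           >> ((m X (U A) ⊗m idm A) >> snd (scrD T X A)))))))))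
    >> (ali (F X) (bangL (bangL A)) (bangL A)
    >> ((m X (U (bangL A)) ⊗m idm (bangL A)) >> snd (scrD T X (bangL A)))))).
Proof.
  arw scrD_chain_rule.
  arw_rev (tens_comp (m X (U A)) (cX (X × U A)) (idm A) (idm A)).
  rewrite id_comp, mm_cX, !tens_comp_l_late. reassoc.
  arw (assoc_natural (m X (U A)) (m X (U A)) (idm A)).
  arw_rev (tens_comp (m X (U A)) (fmap F (id_x_eta X A))
             (m X (U A) ⊗m idm A) (snd (scrD T X A))).
  rewrite mm_id_x_eta, tens_comp_l_early. reassoc.
  arw_rev (assoc_inv_natural (cX X) (cX (U A)) (idm A)).
  arw (middle_swap_tens_r (F X) (F (U A)) A).
  rewrite (tens_comp_r_late (pcomul A) (ali (F X) (bangL A) A)), !tens_id_comp. reassoc.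
  arw (assoc_inv_natural (idm (F X)) (pcomul A) ((m X (U A) ⊗m idm A) >> snd (scrD T X A))).
  arw (assoc_natural_r (F X) (F X) (cA A ⊗m idm A)).
  arw_rev (tens_comp (cX X) (idm (F X ⊗ F X)) (idm (bangL A ⊗ A)) (cA A ⊗m idm A)).
  rewrite id_comp, comp_id. reflexivity.
Qed.

End ChainRule.

Theorem proposition4p32 (G : LNL) (T : GData G) (HT : IsGDSC T)
  (X : CC G) (A : LL G) :
  LScomp (deriv T X A) (pX X A)
  = LScomp
      (LScomp
         (LScomp (fibtens (cXA X A) (LSid X A))
                 (lift X (assoc (Lsmc G) (bangL A) (bangL A) A)))
         (fibtens (pX X A) (deriv T X A)))
      (deriv T X (bangL A)).
Proof.
  unfold pX, cXA. rewrite fibtens_lift_id, lift_comp, fibtens_lift_l, LScomp_lift_l.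
  unfold deriv. rewrite !Sigma_mu, LScomp_lift_r.
  unfold LScomp. cbn [fst snd]. f_equal.
  { rewrite !id_comp. reflexivity. }
  rewrite !id_comp, (functor_id (FF G)). reassoc. apply (deriv_chain_rule_snd HT).
Qed.
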